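(* Let $d\geq 1$, $n\geq 1$, let $X^{(n)}=\{X_1,\dots,X_n\}\subset\mathbb{R}^d$ be a target sample and let $u^{(n)}=\{u_1,\dots,u_n\}\subset\mathbb{R}^d$ be a reference sample in general position (no more than $d$ of the points lie in any $(d-1)$-dimensional affine subspace). Let $\hat T$ be a solution of the discrete optimal transport problem from $u^{(n)}$ to $X^{(n)}$. Then for every $i\in\{1,\dots,n\}$, $$\mathrm{BP}(\hat T(u_i))\in\left[\mathrm{TD}(u_i;u^{(n)})-\frac{d-1}{n},\ \mathrm{TD}(u_i;u^{(n)})\right].$$
   Context: For finite sets $u^{(n)}=\{u_1,\dots,u_n\}$ and $Z^{(n)}=\{Z_1,\dots,Z_n\}$ in $\mathbb{R}^d$, let $\Gamma(u^{(n)},Z^{(n)})$ be the set of bijections $T:u^{(n)}\to Z^{(n)}$; an empirical optimal transport map $\hat T_{Z^{(n)}}$ is any minimizer of $T\mapsto\frac1n\sum_{i=1}^n\|T(u_i)-u_i\|^2$ over $\Gamma(u^{(n)},Z^{(n)})$, and $\hat T=\hat T_{X^{(n)}}$. For $\ell\in\{1,\dots,n\}$, $\mathcal{Q}_{\ell,n}$ is the set of all sets $Z^{(n)}=\{Z_1,\dots,Z_n\}\subset\mathbb{R}^d$ sharing exactly $n-\ell$ elements with $X^{(n)}$. The finite sample breakdown point is $$\mathrm{BP}(\hat T(u_i))=\frac1n\min\Big\{\ell\in\{1,\dots,n\}:\ \sup_{Z^{(n)}\in\mathcal{Q}_{\ell,n}}\|\hat T(u_i)-\hat T_{Z^{(n)}}(u_i)\|=\infty\Big\}.$$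 The Tukey depth of $x\in\mathbb{R}^d$ w.r.t. $u^{(n)}$ is $\mathrm{TD}(x;u^{(n)})=\min_{v\in\mathcal{S}^{d-1}}\frac1n\sum_{j=1}^n\mathbf{1}(\langle v,u_j-x\rangle\geq 0)$, where $\mathcal{S}^{d-1}$ is the unit sphere. *)

From HB Require Import structures.
From mathcomp Require Import all_boot all_order all_algebra all_fingroup.
From mathcomp Require Import all_classical all_reals.
Set Implicit Arguments. Unset Strict Implicit. Unset Printing Implicit Defensive.
Import Order.TTheory GRing.Theory Num.Theory.
Local Open Scope ring_scope.
Local Open Scope classical_set_scope.

Section Defs.
Variables (R : realType) (d n : nat).

Definition dotv (x y : 'rV[R]_d) : R := \sum_(j < d) x 0 j * y 0 j.
Definition enorm (x : 'rV[R]_d) : R := Num.sqrt (dotv x x).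

(* Samples are indexed families of n points; sets of n points = injective families. *)
Definition general_position (u : 'I_n -> 'rV[R]_d) : Prop :=
  forall (w : 'rV[R]_d) (c : R), w != 0 ->
    (#|[set j : 'I_n | dotv w (u j) == c]| <= d)%N.

Definition ot_cost (u Z : 'I_n -> 'rV[R]_d) (s : 'S_n) : R :=
  n%:R^-1 * \sum_(i < n) dotv (Z (s i) - u i) (Z (s i) - u i).

Definition is_ot (u Z : 'I_n -> 'rV[R]_d) (s : 'S_n) : Prop :=
  forall t : 'S_n, ot_cost u Z s <= ot_cost u Z t.

Definition inQ (l : nat) (X Z : 'I_n -> 'rV[R]_d) : Prop :=
  injective Z /\
  #|[set j : 'I_n | [exists k : 'I_n, Z j == X k]]| = (n - l)%N.

(* sel Z is the chosen empirical OT map T_Z (via T_Z(u_i) = Z (sel Z i)). *)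
Definition breaks (u X : 'I_n -> 'rV[R]_d)
    (sel : ('I_n -> 'rV[R]_d) -> 'S_n) (i : 'I_n) (l : nat) : Prop :=
  forall M : R, exists Z : 'I_n -> 'rV[R]_d,
    inQ l X Z /\ M < enorm (X (sel X i) - Z (sel Z i)).

Definition is_BP (u X : 'I_n -> 'rV[R]_d)
    (sel : ('I_n -> 'rV[R]_d) -> 'S_n) (i : 'I_n) (b : R) : Prop :=
  exists l : nat, [/\ (1 <= l <= n)%N, breaks u X sel i l,
    (forall l' : nat, (1 <= l' < l)%N -> ~ breaks u X sel i l')
    & b = l%:R / n%:R].

Definition tukey_depth (u : 'I_n -> 'rV[R]_d) (x : 'rV[R]_d) : R :=
  inf [set (#|[set j : 'I_n | 0 <= dotv v (u j - x)]|)%:R / n%:R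
       | v in [set v : 'rV[R]_d | enorm v = 1]].

End Defs.

From HB Require Import structures.
From mathcomp Require Import all_boot all_order all_algebra all_fingroup.
From mathcomp Require Import all_classical all_reals topology normedtype.
From mathcomp Require Import ring lra zify.
Import Order.TTheory GRing.Theory Num.Theory.
Set Implicit Arguments. Unset Strict Implicit. Unset Printing Implicit Defensive.
Local Open Scope ring_scope.

(* Optimal assignments are monotone: exchanging the targets of u_i and u_j never
   lowers the cost, so <T(u_j) - T(u_i), u_j - u_i> >= 0.

   Upper bound: let v attain the Tukey depth of u_i and translate by t v the
   target points indexed by the halfspace {j | <v, u_j - u_i> >= 0}. For t large,
   monotonicity forces T(u_i) onto a translated point, which escapes to infinity.

   Lower bound: if T_Z(u_i) lies at distance r, far beyond the diameter of X,
   let v be the direction of the displacement. Monotonicity gives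
   <v, u_j - u_i> = O(1/r) for every j whose image is an original point, so the
   halfspace of v consists of the l indices with contaminated images and of
   points of a thin slab through u_i. General position, made uniform over the
   finitely many (d+1)-tuples of points, leaves at most d - 1 of the latter. *)

Section Dotv.
Variables (R : realType) (d : nat).
Implicit Types (x y z v : 'rV[R]_d) (c : R).

Lemma dotvC x y : dotv x y = dotv y x.
Proof. by apply: eq_bigr => j _; rewrite mulrC. Qed.

Lemma dotvDl x y z : dotv (x + y) z = dotv x z + dotv y z.
Proof. by rewrite /dotv -big_split; apply: eq_bigr => j _; rewrite mxE mulrDl. Qed.

Lemma dotvNl x z : dotv (- x) z = - dotv x z.
Proof. by rewrite /dotv -sumrN; apply: eq_bigr => j _; rewrite mxE mulNr. Qed.

Lemma dotvBl x y z : dotv (x - y) z = dotv x z - dotv y z.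
Proof. by rewrite dotvDl dotvNl. Qed.

Lemma dotvZl c x z : dotv (c *: x) z = c * dotv x z.
Proof. by rewrite /dotv mulr_sumr; apply: eq_bigr => j _; rewrite mxE mulrA. Qed.

Lemma dotvBr x y z : dotv z (x - y) = dotv z x - dotv z y.
Proof. by rewrite dotvC dotvBl !(dotvC z). Qed.

Lemma dotvZr c x z : dotv z (c *: x) = c * dotv z x.
Proof. by rewrite dotvC dotvZl dotvC. Qed.

Lemma dotv0l x : dotv 0 x = 0.
Proof. by rewrite -(subrr 0) dotvBl subrr. Qed.

Lemma dotv0r x : dotv x 0 = 0.
Proof. by rewrite dotvC dotv0l. Qed.

Lemma dotvv_ge0 x : 0 <= dotv x x.
Proof. by apply: sumr_ge0 => j _; rewrite -expr2 sqr_ge0. Qed.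

Lemma dotvv_lt1 c x : 0 <= c -> c * d.+1%:R < 1 ->
  (forall k, `|x 0 k| <= c) -> dotv x x < 1.
Proof.
move=> c0 cd xc; apply: (@le_lt_trans _ _ (\sum_(k < d) c ^+ 2)).
  apply: ler_sum => k _; rewrite -expr2 -real_normK ?num_real //.
  by rewrite lerXn2r ?nnegrE ?(le_trans _ (xc k)).
rewrite sumr_const card_ord -mulr_natr; rewrite -natr1 in cd.
have : 0 <= d%:R :> R by []; nra.
Qed.

Lemma enormN x : enorm (- x) = enorm x.
Proof. by rewrite /enorm dotvNl dotvC dotvNl opprK. Qed.

Lemma enorm_eq1 v : enorm v = 1 <-> dotv v v = 1.
Proof.
rewrite /enorm; split=> [v1|->]; last exact: sqrtr1.
by rewrite -[dotv v v]sqr_sqrtr ?dotvv_ge0 // v1 expr1n.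
Qed.

Lemma enorm_subZ_gt_pinfty y v c : dotv v v = 1 ->
  \forall t \near +oo, c < enorm (y - t *: v).
Proof.
move=> v1; have [c0|c0] := ltP c 0.
  by apply: nearW => t; apply: lt_le_trans c0 (sqrtr_ge0 _).
near=> t.
have big : c ^+ 2 < dotv (y - t *: v) (y - t *: v).
  rewrite !(dotvBl, dotvBr, dotvZl, dotvZr) v1 (dotvC v y).
  have : 2 * `|dotv y v| + c ^+ 2 + 1 < t.
    by near: t; apply: nbhs_pinfty_gt; rewrite num_real.
  have := dotvv_ge0 y; have := ler_norm (dotv y v); have := ler_norm (- dotv y v).
  rewrite normrN; have := sqr_ge0 c; rewrite !expr2; nra.
rewrite /enorm -[c](ger0_norm c0) -sqrtr_sqr ltr_sqrt //.
by apply: le_lt_trans big; rewrite sqr_ge0.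
Unshelve. all: by end_near. Qed.

End Dotv.

Lemma affine_lt0_pinfty (R : realType) (b g : R) : g < 0 ->
  \forall t \near +oo, b + t * g < 0.
Proof.
move=> g0; near=> t.
have : `|b| / - g < t by near: t; apply: nbhs_pinfty_gt; rewrite num_real.
rewrite ltr_pdivrMr ?oppr_gt0 // => bt.
have := ler_norm b; nra.
Unshelve. all: by end_near. Qed.

Lemma sum_tpermM (V : zmodType) (n : nat) (F : 'I_n -> 'I_n -> V) (s : 'S_n)
    (i j : 'I_n) : i != j ->
  \sum_k F k ((tperm i j * s)%g k) - \sum_k F k (s k) =
  F i (s j) + F j (s i) - (F i (s i) + F j (s j)).
Proof.
move=> ij; have ji : j != i by rewrite eq_sym.
rewrite (bigD1 i) // (bigD1 j) //= [X in _ - X](bigD1 i) //.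
rewrite [in X in _ - X](bigD1 j) //= !permM tpermL tpermR.
rewrite (eq_bigr (fun k => F k (s k))) => [|k /andP[ki kj]]; last first.
  by rewrite permM tpermD // eq_sym.
by rewrite !addrA opprD addrA addrAC addrK.
Qed.

Section OptimalTransport.
Variables (R : realType) (d n : nat) (u Z : 'I_n -> 'rV[R]_d).

Lemma ot_cost_tpermM (s : 'S_n) (i j : 'I_n) :
  n%:R * (ot_cost u Z (tperm i j * s) - ot_cost u Z s) =
  2 * dotv (Z (s j) - Z (s i)) (u j - u i).
Proof.
have [<-|ij] := eqVneq i j; first by rewrite tperm1 mul1g !subrr mulr0 dotv0l mulr0.
have n0 : n%:R != 0 :> R by rewrite pnatr_eq0 -lt0n (leq_ltn_trans _ (ltn_ord i)).
rewrite /ot_cost -mulrBr mulrA mulfV // mul1r.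
rewrite (sum_tpermM (fun k a => dotv (Z a - u k) (Z a - u k))) //.
rewrite !(dotvBl, dotvBr) !(dotvC (u _) (Z _)); ring.
Qed.

Lemma is_ot_monotone (s : 'S_n) (i j : 'I_n) : is_ot u Z s ->
  0 <= dotv (Z (s j) - Z (s i)) (u j - u i).
Proof.
move=> opt; have := opt (tperm i j * s)%g; rewrite -subr_ge0 => cost_ge.
have : 0 <= n%:R * (ot_cost u Z (tperm i j * s) - ot_cost u Z s) by exact: mulr_ge0.
by rewrite ot_cost_tpermM pmulr_rge0.
Qed.

End OptimalTransport.

Lemma card_classical_set (T : finType) (P : T -> bool) :
  #|[set x | P x]%classic| = #|[set x | P x]|.
Proof. by apply: eq_card => x; rewrite inE; apply/idP/idP => [/set_mem|/mem_set]. Qed.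

Lemma norm_row_mulmx_le (R : realType) (m p : nat) (c : R) (e : 'rV[R]_m)
    (A : 'M[R]_(m, p)) (k : 'I_p) :
  (forall j, `|e 0 j| <= c) -> `|(e *m A) 0 k| <= c * \sum_j \sum_l `|A j l|.
Proof.
move=> ec; rewrite mxE mulr_sumr; apply: le_trans (ler_norm_sum _ _ _) _.
apply: ler_sum => j _; rewrite normrM.
have c0 : 0 <= c := le_trans (normr_ge0 _) (ec j).
apply: le_trans (ler_wpM2r (normr_ge0 _) (ec j)) _; apply: ler_wpM2l => //.
by rewrite (bigD1 k) //= lerDl sumr_ge0.
Qed.

Section GeneralPosition.
Variables (R : realType) (d n : nat) (u : 'I_n -> 'rV[R]_d).
Hypothesis gp : general_position u.

Definition diffmx (f : 'I_d.+1 -> 'I_n) : 'M[R]_d :=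
  \matrix_(k, m) (u (f (lift ord0 m)) - u (f ord0)) 0 k.

Lemma diffmxE (f : 'I_d.+1 -> 'I_n) (y : 'rV[R]_d) m :
  (y *m diffmx f) 0 m = dotv y (u (f (lift ord0 m)) - u (f ord0)).
Proof. by rewrite !mxE; apply: eq_bigr => k _; rewrite mxE. Qed.

Lemma diffmx_unit (f : 'I_d.+1 -> 'I_n) : injective f -> diffmx f \in unitmx.
Proof.
move=> finj; rewrite unitmxE unitfE; apply/negP => /det0P [y y0 yW].
have sub : codom f \subset [set j | dotv y (u j) == dotv y (u (f ord0))].
  apply/fintype.subsetP => _ /codomP [m ->]; rewrite inE.
  case: (unliftP ord0 m) => [m'|] -> //.
  have := congr1 (fun e : 'rV[R]_d => e 0 m') yW; rewrite diffmxE mxE dotvBr.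
  by move/eqP; rewrite subr_eq0.
have := gp (dotv y (u (f ord0))) y0; rewrite card_classical_set.
by move/(leq_trans (subset_leq_card sub)); rewrite card_codom // card_ord ltnn.
Qed.

(* Affinely independent points cannot all lie in a thin slab: the direction v
   is recovered from its (small) products with the edges by the inverse matrix. *)
Lemma slab_excludes_tuple (f : 'I_d.+1 -> 'I_n) (p : 'I_n) : injective f ->
  \forall δ \near (0 : R)^'+%classic, forall v : 'rV[R]_d, dotv v v = 1 ->
    ~ (forall m, `|dotv v (u (f m) - u p)| <= δ).
Proof.
move=> finj; have Wu := diffmx_unit finj.
pose K := \sum_j \sum_k `|invmx (diffmx f) j k|.
have K1 : 0 < K + 1 by rewrite ltr_wpDl // sumr_ge0 // => j _; apply: sumr_ge0.
near=> δ => v v1 small.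
have δ0 : 0 < δ by near: δ; exact: nbhs_right_gt.
set c := 2 * δ * (K + 1); have c0 : 0 <= c by rewrite !mulr_ge0 // ltW.
have cd : c * d.+1%:R < 1.
  rewrite (_ : c * _ = δ * (2 * (K + 1) * d.+1%:R)); last by rewrite /c; ring.
  rewrite -ltr_pdivlMr ?mul1r ?mulr_gt0 //.
  by near: δ; apply: nbhs_right_lt; rewrite invr_gt0 !mulr_gt0.
have edge_small m : `|(v *m diffmx f) 0 m| <= 2 * δ.
  rewrite diffmxE (_ : u _ - u (f ord0) = u (f (lift ord0 m)) - u p - (u (f ord0) - u p)).
    2: by rewrite opprB addrA subrK.
  rewrite dotvBr; have := small (lift ord0 m); have := small ord0.
  rewrite !ler_norml => /andP[a1 a2] /andP[b1 b2]; apply/andP; split; lra.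
have v_small k : `|v 0 k| <= c.
  rewrite -[v](mulmxK Wu); apply: le_trans (norm_row_mulmx_le _ _ edge_small) _.
  by rewrite /c; apply: ler_wpM2l; [rewrite mulr_ge0 // ltW | rewrite lerDl].
by have := dotvv_lt1 c0 cd v_small; rewrite v1 ltxx.
Unshelve. all: by end_near. Qed.

Lemma slab_card (p : 'I_n) : exists2 δ : R, 0 < δ & forall v, dotv v v = 1 ->
  (#|[set j | (`|dotv v (u j - u p)| <= δ)%R]| <= d)%N.
Proof.
have tuples : \forall δ \near (0 : R)^'+%classic,
    forall f : {ffun 'I_d.+1 -> 'I_n}, injective f -> forall v, dotv v v = 1 ->
    ~ (forall m, `|dotv v (u (f m) - u p)| <= δ).
  by apply: filter_forall => f; apply: filter_imply; exact: slab_excludes_tuple.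
have [δ [δ0 thin]] := filter_ex (filterI (nbhs_right_gt 0) tuples).
exists δ => // v v1; rewrite leqNgt; apply/negP => big.
pose f := [ffun m : 'I_d.+1 => enum_val (widen_ord big m)].
apply: (thin f _ v v1) => [a b|m].
  by rewrite !ffunE => /enum_val_inj /(congr1 val) /= /val_inj.
by rewrite ffunE; have := enum_valP (widen_ord big m); rewrite inE.
Qed.

End GeneralPosition.

Lemma perm_moves_into (T : finType) (s : {perm T}) (H : {set T}) (i : T) :
  i \in H -> s i \notin H -> exists2 j, j \notin H & s j \in H.
Proof.
move=> iH siH; case: (pickP [pred j | (j \notin H) && (s j \in H)]) => [j /andP[]|none].
  by exists j.
have sub : s @^-1: H \subset H.
  apply/fintype.subsetP => j; rewrite inE => sjH; apply: contraT => jH.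
  by have := none j; rewrite /= jH sjH.
have /(_ i) := subset_cardP (card_preimset H (@perm_inj _ s)) sub.
by rewrite inE iH (negbTE siH).
Qed.

Lemma inQ_shift (R : realType) (d n : nat) (X : 'I_n -> 'rV[R]_d)
    (H : {set 'I_n}) (y : 'rV[R]_d) :
  injective X -> (forall a b, X a + y != X b) ->
  inQ #|H| X (fun j => if j \in H then X j + y else X j).
Proof.
move=> Xinj fresh; split.
  move=> a b; case: ifP => _; case: ifP => _.
  - by move/addIr/Xinj.
  - by move/eqP; rewrite (negbTE (fresh _ _)).
  - by move/esym/eqP; rewrite (negbTE (fresh _ _)).
  - exact: Xinj.
rewrite card_classical_set.
have -> : [set j | [exists k, (if j \in H then X j + y else X j) == X k]] = ~: H.
  apply/setP => j; rewrite !inE; case: (j \in H) => /=.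
    by apply/existsP => -[k]; rewrite (negbTE (fresh _ _)).
  by apply/existsP; exists j.
by rewrite cardsCs finset.setCK card_ord.
Qed.

Definition halfspace (R : realType) (d n : nat) (u : 'I_n -> 'rV[R]_d)
    (x v : 'rV[R]_d) : {set 'I_n} :=
  [set j | 0 <= dotv v (u j - x)].

Section Breakdown.
Variables (R : realType) (d n : nat) (X u : 'I_n -> 'rV[R]_d).
Variables (sel : ('I_n -> 'rV[R]_d) -> 'S_n) (i : 'I_n).
Hypothesis opt : forall Z : 'I_n -> 'rV[R]_d, injective Z -> is_ot u Z (sel Z).

Lemma mem_halfspace_center v : i \in halfspace u (u i) v.
Proof. by rewrite inE subrr dotv0r. Qed.

Lemma breaks_halfspace v : injective X -> dotv v v = 1 ->
  breaks u X sel i #|halfspace u (u i) v|.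
Proof.
move=> Xinj v1 M; set H := halfspace u (u i) v.
near +oo_R => t.
have fresh : forall a b, X a + t *: v != X b.
  near: t; apply: filter_forall => a; apply: filter_forall => b.
  apply: filterS (enorm_subZ_gt_pinfty (X b - X a) 0 v1) => t pos.
  apply/eqP => Xab; move: pos; rewrite -Xab addrAC addrK subrr.
  by rewrite /enorm dotv0l sqrtr0 ltxx.
have pull : forall a b j, j \notin H -> dotv (X a - X b + t *: v) (u j - u i) < 0.
  near: t; apply: filter_forall => a; apply: filter_forall => b.
  apply: filter_forall => j; have [jH|jH] := boolP (j \in H).
    by apply: nearW.
  have vj : dotv v (u j - u i) < 0 by move: jH; rewrite inE -ltNge.
  apply: filterS (affine_lt0_pinfty (dotv (X a - X b) (u j - u i)) vj) => t' neg _.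
  by rewrite dotvDl dotvZl.
have far : forall a b, M < enorm (X a - X b - t *: v).
  near: t; apply: filter_forall => a; apply: filter_forall => b.
  exact: enorm_subZ_gt_pinfty.
pose Z j := if j \in H then X j + t *: v else X j.
have ZQ : inQ #|H| X Z := inQ_shift H Xinj fresh.
have siH : sel Z i \in H.
  apply: contraT => siH.
  have [j jH sjH] := perm_moves_into (mem_halfspace_center v) siH.
  have := is_ot_monotone i j (opt ZQ.1); rewrite /Z sjH (negbTE siH) addrAC.
  by rewrite leNgt pull.
by exists Z; split => //; rewrite /Z siH opprD addrA.
Unshelve. all: by end_near. Qed.

Lemma card_halfspace_le_breaks l : general_position u -> breaks u X sel i l ->
  exists2 v, dotv v v = 1 & (#|halfspace u (u i) v| <= l + d.-1)%N.
Proof.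
move=> gp brk; have [δ δ0 slab] := slab_card gp i.
near +oo_R => M.
have M0 : 0 < M by near: M; apply: nbhs_pinfty_gt; rewrite num_real.
have Mdiam : forall a b, enorm (X a - X b) <= M.
  near: M; apply: filter_forall => a; apply: filter_forall => b.
  by apply: nbhs_pinfty_ge; rewrite num_real.
have Mslope : forall a b j, dotv (X a - X b) (u j - u i) <= M * δ.
  near: M; apply: filter_forall => a; apply: filter_forall => b.
  apply: filter_forall => j.
  apply: filterS (nbhs_pinfty_ge (num_real (dotv (X a - X b) (u j - u i) / δ))).
  by move=> M'; rewrite ler_pdivrMr.
have [Z [[Zinj Zcard] far]] := brk M.
set s := sel Z; set w := Z (s i) - X (sel X i).
have rM : M < enorm w by rewrite /w -enormN opprB.
set r := enorm w in rM; have r0 : 0 < r := lt_trans M0 rM.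
have w2 : dotv w w = r ^+ 2 by rewrite sqr_sqrtr ?dotvv_ge0.
pose v := r^-1 *: w.
have v1 : dotv v v = 1.
  by rewrite dotvZl dotvZr w2 mulrA -expr2 -exprMn mulVf ?expr1n ?gt_eqF.
exists v => //.
pose P := [set a | [exists k, Z a == X k]].
have siP : s i \notin P.
  apply/negP; rewrite inE => /existsP [k /eqP Zk].
  by move: rM; rewrite /r /w Zk ltNge Mdiam.
have clean_thin j : s j \in P -> dotv v (u j - u i) <= δ.
  rewrite inE => /existsP [m /eqP Zm].
  have := is_ot_monotone i j (opt Zinj); rewrite -/s Zm.
  rewrite (_ : X m - Z (s i) = X m - X (sel X i) - w); last first.
    by rewrite /w opprB addrA subrK.
  rewrite dotvBl subr_ge0 => wj; have := Mslope m (sel X i) j.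
  rewrite /v dotvZl ler_pdivrMl // => Mj.
  by apply: le_trans wj (le_trans Mj _); rewrite ler_pM2r // ltW.
pose A := [set j | s j \notin P].
pose S := [set j | `|dotv v (u j - u i)| <= δ].
have sub : halfspace u (u i) v \subset A :|: S :\ i.
  apply/fintype.subsetP => j; rewrite inE => hj.
  rewrite finset.in_setU finset.in_setD1 [j \in A]inE [j \in S]inE.
  have [->|ji] := eqVneq j i; first by rewrite siP.
  by case: (boolP (s j \in P)) => //= sjP; rewrite ger0_norm // clean_thin.
have cardA : (#|A| <= l)%N.
  rewrite (_ : A = s @^-1: ~: P); last by apply/setP => j; rewrite !inE.
  rewrite card_preimset; last exact: perm_inj.
  by rewrite cardsCs finset.setCK card_ord -card_classical_set Zcard; lia.
have cardS : (#|S :\ i| <= d.-1)%N.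
  have := cardsD1 i S; have := slab v v1; rewrite -/S.
  by rewrite [i \in S]inE subrr dotv0r normr0 ltW //; lia.
apply: leq_trans (subset_leq_card sub) _; rewrite cardsU.
by apply: leq_trans (leq_subr _ _) _; exact: leq_add.
Unshelve. all: by end_near. Qed.

End Breakdown.

Lemma tukey_depth_argmin (R : realType) (d n : nat) (u : 'I_n -> 'rV[R]_d)
    (x : 'rV[R]_d) : (0 < d)%N ->
  exists v0, [/\ dotv v0 v0 = 1,
    tukey_depth u x = #|halfspace u x v0|%:R / n%:R &
    forall v, dotv v v = 1 -> (#|halfspace u x v0| <= #|halfspace u x v|)%N].
Proof.
move=> d0; pose e := delta_mx 0 (Ordinal d0) : 'rV[R]_d.
have e1 : dotv e e = 1.
  rewrite /dotv (bigD1 (Ordinal d0)) //= big1 => [|k kd].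
    by rewrite !mxE eqxx mulr1 addr0.
  by rewrite !mxE (negbTE kd) andbF mul0r.
pose P m := `[< exists2 v, dotv v v = 1 & #|halfspace u x v| = m >].
have [|m /asboolP [v0 v01 v0m] mmin] := @ex_minnP P.
  by exists #|halfspace u x e|; apply/asboolP; exists e.
have v0min v : dotv v v = 1 -> (#|halfspace u x v0| <= #|halfspace u x v|)%N.
  by move=> v1; rewrite v0m; apply: mmin; apply/asboolP; exists v.
exists v0; split => //; rewrite /tukey_depth.
have n0 : 0 <= n%:R^-1 :> R by rewrite invr_ge0.
apply/le_anti/andP; split.
  apply: ge_inf; first by exists 0 => _ [v _ <-]; exact: mulr_ge0.
  by exists v0; [rewrite /= enorm_eq1 | rewrite card_classical_set].
apply: lb_le_inf.
  by exists (#|halfspace u x v0|%:R / n%:R), v0; rewrite /= ?enorm_eq1 ?card_classical_set.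
move=> _ [v /= /enorm_eq1 v1 <-]; rewrite card_classical_set.
by apply: ler_wpM2r => //; rewrite ler_nat v0min.
Qed.

Lemma is_BP_first_break (R : realType) (d n : nat) (u X : 'I_n -> 'rV[R]_d)
    (sel : ('I_n -> 'rV[R]_d) -> 'S_n) (i : 'I_n) (k : nat) :
  (1 <= k <= n)%N -> breaks u X sel i k ->
  exists l, [/\ is_BP u X sel i (l%:R / n%:R), (l <= k)%N & breaks u X sel i l].
Proof.
move=> kn brk; pose P l := (1 <= l <= n)%N && `[< breaks u X sel i l >].
have [|l /andP[ln /asboolP brl] lmin] := @ex_minnP P.
  by exists k; rewrite /P kn; apply/asboolP.
exists l; split => //; last by apply: lmin; rewrite /P kn; apply/asboolP.
exists l; split => // l' /andP[l'1 l'l] brl'.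
have : (l <= l')%N.
  by apply: lmin; rewrite /P l'1 (ltnW (leq_trans l'l (andP ln).2)); apply/asboolP.
by rewrite leqNgt l'l.
Qed.

Theorem mainTheorem1 (R : realType) (d n : nat)
    (X u : 'I_n -> 'rV[R]_d) (sel : ('I_n -> 'rV[R]_d) -> 'S_n) (i : 'I_n) :
  (0 < d)%N -> (0 < n)%N ->
  injective X -> injective u -> general_position u ->
  (forall Z : 'I_n -> 'rV[R]_d, injective Z -> is_ot u Z (sel Z)) ->
  exists b : R, is_BP u X sel i b /\
    tukey_depth u (u i) - (d - 1)%:R / n%:R <= b <= tukey_depth u (u i).
Proof.
move=> d0 n0 Xinj _ gp opt.
have [v0 [v01 depth v0min]] := tukey_depth_argmin u (u i) d0.
set k := #|halfspace u (u i) v0| in depth v0min.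
have k_range : (1 <= k <= n)%N.
  rewrite /k card_gt0 -[n in (_ <= n)%N]card_ord max_card andbT.
  by apply/set0Pn; exists i; exact: mem_halfspace_center.
have [l [BPl lk brl]] := is_BP_first_break k_range (breaks_halfspace i opt Xinj v01).
have [v v1 kl] := card_halfspace_le_breaks opt gp brl.
have {}kl : (k <= l + (d - 1))%N by rewrite subn1 (leq_trans (v0min v v1)).
exists (l%:R / n%:R); split => //.
rewrite depth -mulrBl !ler_pM2r ?invr_gt0 ?ltr0n // ler_nat lk andbT.
by rewrite lerBlDr -natrD ler_nat.
Qed.
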